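(* Let $M,M'\in\mathrm{Mat}(2,\mathbb{Z})$ have the same trace, the same determinant and the same $\mathrm{mgcd}$. Then for every $n\in\mathbb{N}$, the pretail trees of the fixed point $0$ under the actions $x\mapsto Mx\bmod n$ and $x\mapsto M'x\bmod n$ on $(\mathbb{Z}/n\mathbb{Z})^2$ are isomorphic (as rooted trees).
   Context: For $M=\begin{pmatrix}a&b\\c&d\end{pmatrix}$, $\mathrm{mgcd}(M)=\gcd(b,c,d-a)$. A point $y$ is periodic if $M^ky\equiv y\pmod n$ for some $k\ge1$. A pretail of $0$ is a set $\{x,Mx,\dots,M^jx=0\}$ (mod $n$) in which $0$ is the only periodic point. The pretail tree of $0$ is the rooted tree with root $0$ whose vertices are the points of all pretails of $0$, with $x\ne0$ a child of $Mx$. *)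

From mathcomp Require Import all_boot all_order all_algebra.
Set Implicit Arguments. Unset Strict Implicit. Unset Printing Implicit Defensive.
Import GRing.Theory Num.Theory.
Local Open Scope ring_scope.

(* Points of (Z/nZ)^2 are represented by pairs of integers in [0, n). *)
Definition pt := (int * int)%type.

Definition i0 : 'I_2 := ord0.
Definition i1 : 'I_2 := ord_max.

Definition mgcd (M : 'M[int]_2) : int :=
  gcdz (gcdz (M i0 i1) (M i1 i0)) (M i1 i1 - M i0 i0).

Definition act (M : 'M[int]_2) (n : nat) (x : pt) : pt :=
  (((M i0 i0 * x.1 + M i0 i1 * x.2) %% n%:Z)%Z,
   ((M i1 i0 * x.1 + M i1 i1 * x.2) %% n%:Z)%Z).

Definition inZn2 (n : nat) (x : pt) : Prop :=
  (0 <= x.1 < n%:Z) /\ (0 <= x.2 < n%:Z).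

Definition zero_pt : pt := (0, 0).

Definition periodic (M : 'M[int]_2) (n : nat) (y : pt) : Prop :=
  exists k : nat, (1 <= k)%N /\ iter k (act M n) y = y.

Definition pretail_vertex (M : 'M[int]_2) (n : nat) (x : pt) : Prop :=
  inZn2 n x /\
  exists j : nat, iter j (act M n) x = zero_pt /\
    forall i : nat, (i <= j)%N ->
      periodic M n (iter i (act M n) x) -> iter i (act M n) x = zero_pt.

(* Isomorphism of the rooted pretail trees of 0: a bijection between the
   vertex sets sending the root 0 to the root 0 and commuting with the parent
   map (the parent of a vertex x <> 0 is M x). *)
Definition pretail_trees_isomorphic (M M' : 'M[int]_2) (n : nat) : Prop :=
  exists phi : pt -> pt,
    [/\ forall x, pretail_vertex M n x -> pretail_vertex M' n (phi x),
        forall x y, pretail_vertex M n x -> pretail_vertex M n y ->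
                    phi x = phi y -> x = y,
        forall y, pretail_vertex M' n y ->
                  exists2 x, pretail_vertex M n x & phi x = y,
        phi zero_pt = zero_pt &
        forall x, pretail_vertex M n x -> x <> zero_pt ->
                  phi (act M n x) = act M' n (phi x)].

From mathcomp Require Import all_boot all_order all_algebra ring zify.
Set Implicit Arguments. Unset Strict Implicit. Unset Printing Implicit Defensive.
Import GRing.Theory Num.Theory.
Local Open Scope ring_scope.

(* Write M = a + g P with g = mgcd M and P primitive (mgcd P = 1). Equal trace, determinant
   and mgcd let one also write M' = a + g B with B primitive, of the same trace and
   determinant as P. A primitive 2x2 integer matrix is cyclic modulo every n, because the
   binary form det (v, P v) represents a value prime to n; so modulo n both P and B are
   similar to the companion matrix of their common characteristic polynomial. Hence M and M'
   are conjugate by some L in GL_2(Z/nZ), and x |-> L x carries the dynamics of M onto those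
   of M', in particular the pretail tree of 0 onto that of M'. *)

Lemma ord2P (i : 'I_2) : i = i0 \/ i = i1.
Proof. by case: i => [[|[|k]]] Hi; [left|right|]; try apply: val_inj. Qed.

Lemma big_ord2 (R : nmodType) (F : 'I_2 -> R) : \sum_(i < 2) F i = F i0 + F i1.
Proof. by rewrite big_ord_recl big_ord1; congr (_ + F _); apply: val_inj. Qed.

Section Matrix2.
Variable R : comPzRingType.
Implicit Types (A B : 'M[R]_2) (a g : R).

Definition mx2 (p q r s : R) : 'M[R]_2 :=
  \matrix_(i, j) if i == i0 then (if j == i0 then p else q)
                 else (if j == i0 then r else s).

Lemma mx2_ext A B : A i0 i0 = B i0 i0 -> A i0 i1 = B i0 i1 ->
  A i1 i0 = B i1 i0 -> A i1 i1 = B i1 i1 -> A = B.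
Proof.
move=> h00 h01 h10 h11; apply/matrixP => i j.
by case: (ord2P i) => ->; case: (ord2P j) => ->.
Qed.

Lemma mulmx2E m p (A : 'M[R]_(m, 2)) (B : 'M[R]_(2, p)) i j :
  (A *m B) i j = A i i0 * B i0 j + A i i1 * B i1 j.
Proof. by rewrite mxE big_ord2. Qed.

Lemma mxtrace2 A : \tr A = A i0 i0 + A i1 i1.
Proof. exact: big_ord2. Qed.

Lemma det_mx2 A : \det A = A i0 i0 * A i1 i1 - A i0 i1 * A i1 i0.
Proof.
rewrite (expand_det_row _ i0) big_ord2 /cofactor !det_mx11 !mxE /=.
have -> : lift i0 (0 : 'I_1) = i1 by apply: val_inj.
have -> : lift i1 (0 : 'I_1) = i0 by apply: val_inj.
by rewrite expr0 expr1 mul1r mulN1r mulrN.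
Qed.

Lemma mxtrace_shift a g A : \tr (a%:M + g *: A) = a *+ 2 + g * \tr A.
Proof. by rewrite mxtraceD mxtrace_scalar mxtraceZ. Qed.

Lemma det_shift a g A :
  \det (a%:M + g *: A) = a ^+ 2 + a * g * \tr A + g ^+ 2 * \det A.
Proof. by rewrite !det_mx2 mxtrace2 !mxE /=; ring. Qed.

Lemma mulmx_shift L A B a g : L *m A = B *m L ->
  L *m (a%:M + g *: A) = (a%:M + g *: B) *m L.
Proof.
move=> LAB; rewrite mulmxDr mulmxDl mul_mx_scalar mul_scalar_mx.
by rewrite -scalemxAr LAB scalemxAl.
Qed.

Definition companion2 (t d : R) : 'M[R]_2 := mx2 0 (- d) 1 t.

(* The columns of [krylov2 A x y] are v = (x, y) and A v. *)
Definition krylov2 A (x y : R) : 'M[R]_2 :=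
  mx2 x (A i0 i0 * x + A i0 i1 * y) y (A i1 i0 * x + A i1 i1 * y).

Lemma krylov2_companion A x y :
  A *m krylov2 A x y = krylov2 A x y *m companion2 (\tr A) (\det A).
Proof. by apply: mx2_ext; rewrite !mulmx2E mxtrace2 det_mx2 !mxE /=; ring. Qed.

Lemma det_krylov2 A x y : \det (krylov2 A x y) =
  A i1 i0 * x ^+ 2 + (A i1 i1 - A i0 i0) * x * y - A i0 i1 * y ^+ 2.
Proof. by rewrite det_mx2 !mxE /=; ring. Qed.

End Matrix2.

Section Similarity.
Variable R : comUnitRingType.

Lemma invmx_intertwine (A K C : 'M[R]_2) :
  K \in unitmx -> A *m K = K *m C -> invmx K *m A = C *m invmx K.
Proof.
move=> Ku AK; rewrite -[invmx K *m A]mulmx1 -(mulmxV Ku) !mulmxA -(mulmxA _ A) AK.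
by rewrite mulmxA mulVmx // mul1mx.
Qed.

Lemma similar_mx2 (A B : 'M[R]_2) x y x' y' :
  \tr A = \tr B -> \det A = \det B ->
  \det (krylov2 A x y) \is a GRing.unit -> \det (krylov2 B x' y') \is a GRing.unit ->
  exists2 L, L \in unitmx & L *m A = B *m L.
Proof.
move=> trAB detAB KAu KBu; set KA := krylov2 A x y; set KB := krylov2 B x' y'.
exists (KB *m invmx KA); first by rewrite unitmx_mul unitmx_inv; apply/andP.
rewrite -mulmxA (invmx_intertwine KAu (krylov2_companion A x y)) trAB detAB.
by rewrite mulmxA -krylov2_companion mulmxA.
Qed.

End Similarity.

Lemma dvdn_partn_prime (pi : nat_pred) (n p : nat) : (0 < n)%N -> prime p -> (p %| n)%N ->
  (p %| n`_pi)%N = (p \in pi).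
Proof.
move=> n0 pp pn; have := pi_of_part pi n0 p.
by rewrite !inE !mem_primes pp part_gt0 n0 pn /=.
Qed.

Lemma prime_dvdzM (p : nat) (x y : int) : prime p ->
  (p%:Z %| x * y)%Z = (p%:Z %| x)%Z || (p%:Z %| y)%Z.
Proof. by move=> pp; rewrite !dvdzE abszM Euclid_dvdM. Qed.

(* Evaluate at x = n_pi, y = n_pi' where pi is chosen so that, for each prime p | n,
   exactly one monomial of the form is prime to p. *)
Lemma primitive_form_coprime (a b c : int) (n : nat) : (0 < n)%N ->
  (forall p : nat, prime p -> (p %| a)%Z -> (p %| b)%Z -> (p %| c)%Z -> False) ->
  exists x y : int, coprime `|a * x ^+ 2 + b * x * y + c * y ^+ 2| n.
Proof.
move=> n0 prim.
pose piX : nat_pred := [pred p | (p %| `|a|)%N && ~~ (p %| `|c|)%N].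
pose piY : nat_pred := [pred p | ~~ (p %| `|a|)%N].
exists (n`_piX)%:Z, (n`_piY)%:Z; set x := (n`_piX)%:Z; set y := (n`_piY)%:Z.
set f := a * x ^+ 2 + b * x * y + c * y ^+ 2.
rewrite /coprime; case: (ltngtP (gcdn `|f| n) 1) => [|gt1|] //.
  by rewrite ltnS leqNgt gcdn_gt0 n0 orbT.
have [p pp pg] := pdivP gt1.
have pn : (p %| n)%N := dvdn_trans pg (dvdn_gcdr _ _).
have pf : (p%:Z %| f)%Z := dvdn_trans pg (dvdn_gcdl _ _).
have px : (p%:Z %| x)%Z = (p \in piX) by rewrite dvdzE /= dvdn_partn_prime.
have py : (p%:Z %| y)%Z = (p \in piY) by rewrite dvdzE /= dvdn_partn_prime.
have pa : (p%:Z %| a)%Z = (p %| `|a|)%N by [].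
have pc : (p%:Z %| c)%Z = (p %| `|c|)%N by [].
rewrite !inE -pa -pc in px py.
have dvdX : forall z : int, (p%:Z %| z ^+ 2)%Z = (p%:Z %| z)%Z by move=> z; rewrite prime_dvdzM ?orbb.
have [pa'|pa'] := boolP (p%:Z %| a)%Z; rewrite ?pa' /= in px py.
  have [pc'|pc'] := boolP (p%:Z %| c)%Z; rewrite ?pc' /= in px.
    have : (p%:Z %| b * x * y)%Z.
      have -> : b * x * y = f - a * x ^+ 2 - c * y ^+ 2 by rewrite /f; ring.
      by rewrite !rpredB // dvdz_mulr.
    rewrite !prime_dvdzM // px py !orbF => pb.
    by have := prim p pp pa' pb pc'.
  have : (p%:Z %| c * y ^+ 2)%Z.
    have -> : c * y ^+ 2 = f - x * (a * x + b * y) by rewrite /f; ring.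
    by rewrite rpredB // dvdz_mulr // px.
  by rewrite prime_dvdzM // dvdX py (negbTE pc').
have : (p%:Z %| a * x ^+ 2)%Z.
  have -> : a * x ^+ 2 = f - y * (b * x + c * y) by rewrite /f; ring.
  by rewrite rpredB // dvdz_mulr // py.
by rewrite prime_dvdzM // dvdX px (negbTE pa').
Qed.

Lemma mgcd_shift (a g : int) (P : 'M[int]_2) :
  mgcd (a%:M + g *: P) = mgcd P * `|g|%:Z.
Proof.
rewrite /mgcd !mxE /=.
have -> : a *+ 0 + g * P i0 i1 = P i0 i1 * g by ring.
have -> : a *+ 0 + g * P i1 i0 = P i1 i0 * g by ring.
have -> : a *+ 1 + g * P i1 i1 - (a *+ 1 + g * P i0 i0) = (P i1 i1 - P i0 i0) * g by ring.
by rewrite -mulz_gcdl [RHS]mulz_gcdl /gcdz !abszM absz_nat.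
Qed.

Lemma mgcd_eq0 (M : 'M[int]_2) : mgcd M = 0 -> M = (M i0 i0)%:M.
Proof.
move/eqP; rewrite !gcdz_eq0 subr_eq0 => /andP[/andP[/eqP b0 /eqP c0] /eqP da].
by apply: mx2_ext; rewrite !mxE /= ?mulr1n ?mulr0n.
Qed.

Lemma mgcd_decomp (M : 'M[int]_2) : mgcd M != 0 ->
  exists2 P, M = (M i0 i0)%:M + mgcd M *: P & mgcd P = 1.
Proof.
move=> g0; set g := mgcd M.
have gb : (g %| M i0 i1)%Z := dvdz_trans (dvdz_gcdl _ _) (dvdz_gcdl _ _).
have gc : (g %| M i1 i0)%Z := dvdz_trans (dvdz_gcdl _ _) (dvdz_gcdr _ _).
have gd : (g %| M i1 i1 - M i0 i0)%Z := dvdz_gcdr _ _.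
pose P := mx2 0 (M i0 i1 %/ g)%Z (M i1 i0 %/ g)%Z ((M i1 i1 - M i0 i0) %/ g)%Z.
have eM : M = (M i0 i0)%:M + g *: P.
  apply: mx2_ext; rewrite !mxE /= ?mulr1n ?mulr0n ?mulr0 ?addr0 ?add0r
    ?[g * _]mulrC ?divzK //.
  by rewrite addrC subrK.
exists P => //; apply: (mulIf g0); rewrite mul1r.
have g_abs : `|g|%:Z = g by rewrite /g /mgcd /gcdz.
by rewrite -[mgcd M in LHS]g_abs -(mgcd_shift (M i0 i0)) -eM.
Qed.

(* Writing M = a + g P and M' = a' + g P', the discriminants of P and P' agree, which
   forces tr P = tr P' (mod 2); half their difference is the shift k. *)
Lemma common_primitive_part (a a' g : int) (P P' : 'M[int]_2) : g != 0 ->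
  \tr (a%:M + g *: P) = \tr (a'%:M + g *: P') ->
  \det (a%:M + g *: P) = \det (a'%:M + g *: P') ->
  exists k : int, [/\ a'%:M + g *: P' = a%:M + g *: (k%:M + P'),
                   \tr (k%:M + P') = \tr P & \det (k%:M + P') = \det P].
Proof.
move=> g0; rewrite !mxtrace_shift !det_shift.
set t := \tr P; set t' := \tr P'; set d := \det P; set d' := \det P'.
move=> htr hdet.
have disc : t ^+ 2 - 4 * d = t' ^+ 2 - 4 * d'.
  apply: (mulfI (expf_neq0 2 g0)).
  have discE b s e : g ^+ 2 * (s ^+ 2 - 4 * e) =
      (b *+ 2 + g * s) ^+ 2 - 4 * (b ^+ 2 + b * g * s + g ^+ 2 * e) by ring.
  by rewrite (discE a) (discE a') htr hdet.
have even : (2 %| t - t')%Z.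
  have : (2%:Z %| (t - t') * (t - t' + 2 * t'))%Z.
    have -> : (t - t') * (t - t' + 2 * t') =
        (t ^+ 2 - 4 * d) - (t' ^+ 2 - 4 * d') + 2 * (2 * (d - d')) by ring.
    by rewrite disc subrr add0r dvdz_mulr.
  by rewrite prime_dvdzM // => /orP[] //; rewrite rpredDr // dvdz_mulr.
set k := ((t - t') %/ 2)%Z; have ek : t = t' + 2 * k by rewrite /k mulrC divzK // subrKC.
have ea : a' = a + g * k by move: htr; rewrite ek !mulr2n; lia.
exists k; split.
- by rewrite ea scalerDr scale_scalar_mx raddfD addrA.
- by rewrite mxtraceD mxtrace_scalar ek mulr2n; lia.
have := det_shift k 1 P'; rewrite scale1r -/t' -/d' => ->.
apply: (mulfI (_ : 4 != 0)) => //.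
have -> : 4 * d = t ^+ 2 - (t ^+ 2 - 4 * d) by ring.
by rewrite disc ek; ring.
Qed.

Lemma act_inZn2 n A x : (0 < n)%N -> inZn2 n (act A n x).
Proof.
move=> n_gt0; have n0 : n%:Z != 0 by rewrite eqz_nat -lt0n.
by split; rewrite /= modz_ge0 // ltz_pmod // ltz_nat.
Qed.

Lemma iter_act_inZn2 n A k x : (0 < n)%N -> inZn2 n x -> inZn2 n (iter k (act A n) x).
Proof. by case: k => [|k] //= n_gt0 _; apply: act_inZn2. Qed.

Lemma act_zero n A : act A n zero_pt = zero_pt.
Proof. by rewrite /act /= !mulr0 addr0 mod0z. Qed.

Section Conjugacy.
Variables (n : nat) (M M' : 'M[int]_2) (phi psi : pt -> pt).
Hypotheses (n_gt0 : (0 < n)%N) (phi_inZn2 : forall x, inZn2 n x -> inZn2 n (phi x)).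
Hypotheses (phiK : forall x, inZn2 n x -> psi (phi x) = x).
Hypotheses (phi_act : forall x, phi (act M n x) = act M' n (phi x)).
Hypothesis phi0 : phi zero_pt = zero_pt.

Lemma iter_conj k x : phi (iter k (act M n) x) = iter k (act M' n) (phi x).
Proof. by elim: k => [|k IHk] //=; rewrite phi_act IHk. Qed.

Lemma periodic_conj y : inZn2 n y -> periodic M' n (phi y) -> periodic M n y.
Proof.
move=> yZ [k [k_gt0 yk]]; exists k; split => //.
by rewrite -{2}(phiK yZ) -yk -iter_conj phiK //; apply: iter_act_inZn2.
Qed.

Lemma pretail_vertex_conj x : pretail_vertex M n x -> pretail_vertex M' n (phi x).
Proof.
move=> [xZ [j [xj x_pretail]]]; split; first exact: phi_inZn2.
exists j; split; first by rewrite -iter_conj xj.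
move=> i le_ij; rewrite -iter_conj => /periodic_conj xi_per.
by rewrite x_pretail //; apply/xi_per/iter_act_inZn2.
Qed.

End Conjugacy.

Lemma pretail_trees_isomorphic_conj n M M' (phi psi : pt -> pt) : (0 < n)%N ->
  (forall x, inZn2 n x -> inZn2 n (phi x)) -> (forall x, inZn2 n x -> inZn2 n (psi x)) ->
  (forall x, inZn2 n x -> psi (phi x) = x) -> (forall x, inZn2 n x -> phi (psi x) = x) ->
  (forall x, phi (act M n x) = act M' n (phi x)) ->
  (forall x, psi (act M' n x) = act M n (psi x)) ->
  phi zero_pt = zero_pt -> psi zero_pt = zero_pt ->
  pretail_trees_isomorphic M M' n.
Proof.
move=> n_gt0 phiZ psiZ phiK psiK phi_act psi_act phi0 psi0; exists phi; split => //.
- exact: pretail_vertex_conj phiZ phiK phi_act phi0.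
- by move=> x y [xZ _] [yZ _] exy; rewrite -(phiK _ xZ) -(phiK _ yZ) exy.
- move=> y y_vertex; exists (psi y); last by case: y_vertex => /psiK.
  exact: pretail_vertex_conj psiZ psiK psi_act psi0 _ y_vertex.
Qed.

Lemma pretail_trees_isomorphic_act_eq n M M' : (0 < n)%N ->
  act M n =1 act M' n -> pretail_trees_isomorphic M M' n.
Proof.
by move=> n_gt0 eMM'; apply: (@pretail_trees_isomorphic_conj _ _ _ id id) => // x /=.
Qed.

Section ModularAction.
Variable m : nat.
(* 'Z_n is Z/nZ only for n >= 2. *)
Local Notation n := m.+2.
Local Notation red := (intr : int -> 'Z_n).

Definition zn_vec (x : pt) : 'cV['Z_n]_2 :=
  \col_i red (if i == i0 then x.1 else x.2).

Definition lift_mx (L : 'M['Z_n]_2) : 'M[int]_2 := map_mx (fun z : 'Z_n => (z : nat)%:Z) L.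

Lemma lift_mxK L : map_mx red (lift_mx L) = L.
Proof. by apply/matrixP => i j; rewrite !mxE; exact: natr_Zp. Qed.

Lemma red_modz z : red (z %% n)%Z = red z.
Proof.
have red_n : red n = 0 by exact: pchar_Zp.
by rewrite /modz rmorphB rmorphM /= red_n mulr0 subr0.
Qed.

Lemma red_inj_range (z1 z2 : int) :
  0 <= z1 < n%:Z -> 0 <= z2 < n%:Z -> red z1 = red z2 -> z1 = z2.
Proof.
case: z1 z2 => [k1|//] [k2|//]; rewrite !ltz_nat => /andP[_ k1n] /andP[_ k2n].
by move/(congr1 val); rewrite /= !val_Zp_nat // !modn_small // => ->.
Qed.

Lemma zn_vec_inj x y : inZn2 n x -> inZn2 n y -> zn_vec x = zn_vec y -> x = y.
Proof.
case: x y => [x1 x2] [y1 y2] [/= x1Z x2Z] [/= y1Z y2Z] /matrixP exy.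
have := exy i0 0; have := exy i1 0; rewrite !mxE /=.
by move=> /(red_inj_range x2Z y2Z) -> /(red_inj_range x1Z y1Z) ->.
Qed.

Lemma zn_vec_act A x : zn_vec (act A n x) = map_mx red A *m zn_vec x.
Proof.
apply/matrixP => i j; rewrite mulmx2E !mxE /=.
by case: (ord2P i) => -> /=; rewrite red_modz rmorphD !rmorphM.
Qed.

Lemma red_coprime_unit z : coprime `|z| n -> red z \is a GRing.unit.
Proof.
case: z => k /= kn; first by rewrite unitZpE // coprime_sym.
by rewrite NegzE rmorphN unitrN /= unitZpE // coprime_sym.
Qed.

Lemma pretail_trees_isomorphic_similar (M M' : 'M[int]_2) (L : 'M['Z_n]_2) :
  L \in unitmx -> L *m map_mx red M = map_mx red M' *m L ->
  pretail_trees_isomorphic M M' n.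
Proof.
move=> Lu LM.
have conj K A B : K *m map_mx red A = map_mx red B *m K ->
    forall x, act (lift_mx K) n (act A n x) = act B n (act (lift_mx K) n x).
  move=> KAB x; apply: zn_vec_inj; try exact: act_inZn2.
  by rewrite !zn_vec_act lift_mxK !mulmxA KAB.
have inv K K' : K *m K' = 1%:M ->
    forall x, inZn2 n x -> act (lift_mx K) n (act (lift_mx K') n x) = x.
  move=> KK' x xZ; apply: zn_vec_inj => //; first exact: act_inZn2.
  by rewrite !zn_vec_act !lift_mxK mulmxA KK' mul1mx.
apply: (@pretail_trees_isomorphic_conj _ _ _ (act (lift_mx L) n)
          (act (lift_mx (invmx L)) n)) => //; try by move=> *; apply: act_inZn2.
- by apply: inv; rewrite mulVmx.
- by apply: inv; rewrite mulmxV.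
- exact: conj.
- exact/conj/(invmx_intertwine Lu).
- exact: act_zero.
- exact: act_zero.
Qed.

Lemma mgcd1_no_common_prime (P : 'M[int]_2) (p : nat) : mgcd P = 1 -> prime p ->
  (p %| P i0 i1)%Z -> (p %| P i1 i0)%Z -> (p %| P i1 i1 - P i0 i0)%Z -> False.
Proof.
move=> P1 pp pb pc pd; have : (p %| mgcd P)%Z by rewrite !dvdz_gcd pb pc pd.
by rewrite P1 dvdz1 absz_nat => /eqP p1; rewrite p1 in pp.
Qed.

Lemma cyclic_vector_primitive (P : 'M[int]_2) : mgcd P = 1 ->
  exists x y : 'Z_n, \det (krylov2 (map_mx red P) x y) \is a GRing.unit.
Proof.
move=> P1.
have [p pp pc pd|x [y xy]] :=
    @primitive_form_coprime (P i1 i0) (P i1 i1 - P i0 i0) (- P i0 i1) n isT.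
  by rewrite rpredN => pb; apply: mgcd1_no_common_prime P1 pp pb pc pd.
exists (red x), (red y); move/red_coprime_unit: xy.
by rewrite det_krylov2 !mxE mulNr rmorphB rmorphD !(rmorphXn, rmorphM) rmorphB.
Qed.

Lemma pretail_trees_isomorphic_primitive (a g : int) (P B : 'M[int]_2) :
  mgcd P = 1 -> mgcd B = 1 -> \tr P = \tr B -> \det P = \det B ->
  pretail_trees_isomorphic (a%:M + g *: P) (a%:M + g *: B) n.
Proof.
move=> P1 B1 trPB detPB.
have [x [y Px]] := cyclic_vector_primitive P1.
have [x' [y' Bx']] := cyclic_vector_primitive B1.
have [||L Lu LPB] := similar_mx2 _ _ Px Bx'.
- by rewrite !trace_map_mx trPB.
- by rewrite !det_map_mx detPB.
apply: (pretail_trees_isomorphic_similar Lu).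
by rewrite !map_mxD !map_scalar_mx !map_mxZ; apply: mulmx_shift.
Qed.

End ModularAction.

Theorem corollary3p7 (M M' : 'M[int]_2) :
  \tr M = \tr M' -> \det M = \det M' -> mgcd M = mgcd M' ->
  forall n : nat, (0 < n)%N -> pretail_trees_isomorphic M M' n.
Proof.
move=> trM detM gM n; case: n => [|[|m]] // _.
  by apply: pretail_trees_isomorphic_act_eq => // x; rewrite /act !modz1.
have [g0|g_neq0] := eqVneq (mgcd M) 0.
  have eM := mgcd_eq0 g0; have eM' := mgcd_eq0 (etrans (esym gM) g0).
  suff -> : M = M' by apply: pretail_trees_isomorphic_act_eq.
  move: trM; rewrite eM eM' !mxtrace_scalar !mulr2n => tr_eq.
  by congr (_%:M); lia.
have [P eM P1] := mgcd_decomp g_neq0.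
have g'_neq0 : mgcd M' != 0 by rewrite -gM.
have [P' eM' P'1] := mgcd_decomp g'_neq0.
set a := M i0 i0 in eM; set a' := M' i0 i0 in eM'; rewrite -gM in eM'.
set g := mgcd M in eM eM' g_neq0.
rewrite eM eM' in trM detM *.
have [k [-> trB detB]] := common_primitive_part g_neq0 trM detM.
apply: pretail_trees_isomorphic_primitive => //.
by rewrite -[P']scale1r mgcd_shift P'1.
Qed.
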